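(* Let $f\in\mathcal{F}_3$ and $\mathbf{x}\in[0,1]^3$. (a) There exists an optimal solution $\theta$ of the linear program defining $f^{+}(\mathbf{x})$ with $\theta(\{1,2,3\})\le x_1x_2x_3$. (b) If moreover $x_1+x_2+x_3\le1$ or $x_1+x_2+x_3\ge2$, there exists an optimal solution $\theta$ of that linear program which is negatively cylinder dependent, i.e. $\sum_{S\supseteq T}\theta(S)\le\prod_{i\in T}x_i$ for every nonempty $T\subseteq[3]$.
   Context: $[n]=\{1,\dots,n\}$. A set function $f:2^{[n]}\to\mathbb{R}_+$ is monotone if $f(S)\le f(T)$ for $S\subseteq T$, submodular if $f(S)+f(T)\ge f(S\cap T)+f(S\cup T)$. $\mathcal{F}_n$ is the set of monotone submodular $f:2^{[n]}\to\mathbb{R}_+$ with $f(\emptyset)=0$, $f([n])=1$. For $\mathbf{x}\in[0,1]^n$, the concave closure $f^{+}(\mathbf{x})$ is the optimal value of the linear program: maximize $\sum_{S\subseteq[n]}\theta(S)f(S)$ over $\theta:2^{[n]}\to\mathbb{R}_{\ge0}$ with $\sum_S\theta(S)=1$ and $\sum_{S\ni i}\theta(S)=x_i$ for all $i\in[n]$. *)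

From mathcomp Require Import all_boot all_order all_algebra.
From mathcomp Require Import reals.
Set Implicit Arguments. Unset Strict Implicit. Unset Printing Implicit Defensive.
Import Order.TTheory GRing.Theory Num.Theory.
Local Open Scope ring_scope.

Section Defs.
Variables (R : realType) (n : nat).

Definition in_Fn (f : {set 'I_n} -> R) : Prop :=
  [/\ (forall S, 0 <= f S),
      (forall S T : {set 'I_n}, S \subset T -> f S <= f T),
      (forall S T : {set 'I_n}, f (S :&: T) + f (S :|: T) <= f S + f T),
      f set0 = 0 & f setT = 1].

Definition in_cube (x : 'I_n -> R) : Prop := forall i, 0 <= x i <= 1.

Definition lp_feasible (x : 'I_n -> R) (theta : {set 'I_n} -> R) : Prop :=
  [/\ (forall S, 0 <= theta S),
      \sum_(S : {set 'I_n}) theta S = 1 &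
      (forall i, \sum_(S : {set 'I_n} | i \in S) theta S = x i)].

Definition lp_obj (f : {set 'I_n} -> R) (theta : {set 'I_n} -> R) : R :=
  \sum_(S : {set 'I_n}) theta S * f S.

Definition lp_optimal (f : {set 'I_n} -> R) (x : 'I_n -> R)
    (theta : {set 'I_n} -> R) : Prop :=
  lp_feasible x theta /\
  (forall theta', lp_feasible x theta' -> lp_obj f theta' <= lp_obj f theta).

Definition neg_cylinder_dep (x : 'I_n -> R) (theta : {set 'I_n} -> R) : Prop :=
  forall T : {set 'I_n}, T != set0 ->
    \sum_(S : {set 'I_n} | T \subset S) theta S <= \prod_(i in T) x i.

End Defs.

(* Everything rests on weak LP duality: a feasible [theta] is optimal as soon as
   a dual pair [(lam, mu)] with [f S <= lam + \sum_(i in S) mu i] for every [S]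
   has the same objective value.  If [\sum_i x i <= 1], the mixture of [set0]
   and the singletons is optimal, certified by [mu i = f [set i]] and
   subadditivity; if [\sum_i (1 - x i) <= 1], the mixture of [setT] and the
   complements of singletons is optimal, certified by the smallest marginals
   [mu i = f setT - f (~: [set i])].  Both mixtures are negatively cylinder
   dependent (the second by the Weierstrass product inequality), and cylinder
   dependence at [setT] bounds [theta setT] by [\prod_i x i].  For three
   elements and [1 <= \sum_i x i <= 2], relabel the ground set so that
   [f [set i] + f (~: [set i])] is largest at [i = 0] and [x 2 <= x 1]; one of
   three explicit mixtures of sets of size at most two is then optimal, again
   with an explicit dual certificate, and it puts no mass on [setT]. *)

From mathcomp Require Import all_boot all_order all_algebra fingroup perm.
From mathcomp Require Import reals ring lra.
Import Order.TTheory GRing.Theory Num.Theory.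
Local Open Scope ring_scope.

Set Implicit Arguments.
Unset Strict Implicit.
Unset Printing Implicit Defensive.

Section ConcaveClosureLP.
Variables (R : realType) (n : nat).
Implicit Types (f theta : {set 'I_n} -> R) (x : 'I_n -> R) (S T : {set 'I_n}).
Implicit Types (s : seq (R * {set 'I_n})).

Lemma lp_obj_le_dual f x theta (lam : R) (mu : 'I_n -> R) :
  lp_feasible x theta -> (forall S, f S <= lam + \sum_(i in S) mu i) ->
  lp_obj f theta <= lam + \sum_i mu i * x i.
Proof.
case=> theta_ge0 theta_sum1 theta_marg dual.
apply: le_trans (_ : \sum_S theta S * (lam + \sum_(i in S) mu i) <= _).
  by apply: ler_sum => S _; rewrite ler_wpM2l.
under eq_bigr do rewrite mulrDr mulr_sumr.
rewrite big_split /= -mulr_suml theta_sum1 mul1r lerD2l (exchange_big_dep xpredT) //=.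
apply: ler_sum => i _; rewrite -theta_marg mulr_sumr.
by apply: ler_sum => S _; rewrite mulrC.
Qed.

Lemma lp_optimal_of_dual f x theta (lam : R) (mu : 'I_n -> R) :
  lp_feasible x theta -> (forall S, f S <= lam + \sum_(i in S) mu i) ->
  lp_obj f theta = lam + \sum_i mu i * x i -> lp_optimal f x theta.
Proof.
by move=> feas dual obj; split=> // theta' feas'; rewrite obj (lp_obj_le_dual feas').
Qed.

Definition mix (s : seq (R * {set 'I_n})) S : R := \sum_(p <- s | p.2 == S) p.1.

Lemma big_mix (P : pred {set 'I_n}) (F : {set 'I_n} -> R) s :
  \sum_(S | P S) mix s S * F S = \sum_(p <- s | P p.2) p.1 * F p.2.
Proof.
under eq_bigr do rewrite /mix mulr_suml.
rewrite (exchange_big_dep xpredT) //= [RHS]big_mkcond; apply: eq_bigr => p _.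
case: ifP => [Pp|nPp].
  by rewrite (big_pred1 p.2) // => S /=; rewrite eq_sym; case: eqP => [->|]; rewrite ?Pp ?andbF.
by apply: big_pred0 => S; case: eqP => [<-|]; rewrite ?nPp ?andbF.
Qed.

Lemma sum_mix (P : pred {set 'I_n}) s :
  \sum_(S | P S) mix s S = \sum_(p <- s | P p.2) p.1.
Proof.
transitivity (\sum_(S | P S) mix s S * 1); first by apply: eq_bigr => S _; rewrite mulr1.
by rewrite big_mix; under eq_bigr do rewrite mulr1.
Qed.

Lemma lp_feasible_mix x s :
  all (fun p => 0 <= p.1) s -> \sum_(p <- s) p.1 = 1 ->
  (forall i, \sum_(p <- s | i \in p.2) p.1 = x i) -> lp_feasible x (mix s).
Proof.
move=> /allP s_ge0 s_sum1 s_marg; split.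
- by move=> S; rewrite /mix big_seq_cond sumr_ge0 // => p /andP[/s_ge0].
- by rewrite (sum_mix predT).
- by move=> i; rewrite sum_mix.
Qed.

Lemma lp_obj_mix f s : lp_obj f (mix s) = \sum_(p <- s) p.1 * f p.2.
Proof. exact: big_mix. Qed.

Lemma lp_optimal_mix f x s (lam : R) (mu : 'I_n -> R) :
  all (fun p => 0 <= p.1) s -> \sum_(p <- s) p.1 = 1 ->
  (forall i, \sum_(p <- s | i \in p.2) p.1 = x i) ->
  (forall S, f S <= lam + \sum_(i in S) mu i) ->
  \sum_(p <- s) p.1 * f p.2 = lam + \sum_i mu i * x i -> lp_optimal f x (mix s).
Proof.
move=> s_ge0 s_sum1 s_marg dual obj.
by apply: lp_optimal_of_dual dual _; [exact: lp_feasible_mix | rewrite lp_obj_mix].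
Qed.

Lemma in_Fn_subadditive f S : in_Fn f -> f S <= \sum_(i in S) f [set i].
Proof.
case=> f_ge0 _ f_submod f0 _; rewrite -big_enum -{1}[S]set_enum.
elim: (enum S) => [|i r IH]; first by rewrite big_nil set_nil f0.
rewrite big_cons set_cons; apply: le_trans _ (lerD (lexx _) IH).
by apply: le_trans (f_submod [set i] [set:: r]); rewrite lerDr f_ge0.
Qed.

Lemma in_Fn_marginal_superadditive f S : in_Fn f ->
  \sum_(i in ~: S) (f setT - f (~: [set i])) <= f setT - f S.
Proof.
case=> _ _ f_submod _ _.
suff gen : forall (r : seq 'I_n) (A : {set 'I_n}), uniq r -> all (fun i => i \notin A) r ->
    f A + \sum_(i <- r) (f setT - f (~: [set i])) <= f (A :|: [set:: r]).
  rewrite lerBrDl -big_enum; apply: le_trans (gen _ _ (enum_uniq _) _) _.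
    by apply/allP => i; rewrite mem_enum inE.
  by rewrite set_enum setUCr.
elim=> [|i r IH] A /=; first by rewrite big_nil set_nil setU0 addr0.
case/andP=> ir r_uniq /andP[iA rA]; rewrite big_cons set_cons setUCA setUA.
apply: le_trans _ (IH (i |: A) r_uniq _); last first.
  by apply/allP => j jr; rewrite !inE negb_or (allP rA) // andbT; apply: contraNneq ir => <-.
have step : f A + (f setT - f (~: [set i])) <= f (i |: A).
  have := f_submod (i |: A) (~: [set i]).
  by rewrite -setDE setU1K // setUAC setUCr setTU; lra.
by apply: le_trans (lerD step (lexx _)); rewrite addrA.
Qed.

Lemma one_sub_sum_le_prod x (T : {set 'I_n}) : in_cube x ->
  1 - \sum_(i in T) (1 - x i) <= \prod_(i in T) x i.
Proof.
move=> x01; pose K (p s : R) := 0 <= s /\ 1 - s <= p.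
suff [] : K (\prod_(i in T) x i) (\sum_(i in T) (1 - x i)) by [].
apply: (big_rec2 K); first by rewrite /K subr0.
move=> i p s _ [s_ge0 sp]; have /andP[xi_ge0 xi_le1] := x01 i.
split; first by rewrite addr_ge0 // subr_ge0.
by nra.
Qed.

Lemma neg_cylinder_dep_setT x theta : [set: 'I_n] != set0 ->
  neg_cylinder_dep x theta -> theta setT <= \prod_i x i.
Proof.
move=> setT_neq0 /(_ _ setT_neq0); rewrite (big_pred1 setT) => [|S]; last by rewrite /= subTset.
by under [X in _ <= X]eq_bigl do rewrite inE.
Qed.

Lemma lp_optimum_singletons f x : in_Fn f -> in_cube x -> \sum_i x i <= 1 ->
  exists theta, lp_optimal f x theta /\ neg_cylinder_dep x theta.
Proof.
move=> Ff x01 sum_le1; set s := (1 - \sum_i x i, set0) :: [seq (x i, [set i]) | i : 'I_n].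
have sum_s (P : pred {set 'I_n}) :
    \sum_(p <- s | P p.2) p.1 = (if P set0 then 1 - \sum_i x i else 0) + \sum_(i | P [set i]) x i.
  by rewrite big_cons big_image_cond /=; case: (P set0); rewrite ?add0r.
have [f_ge0 _ _ f0 _] := Ff.
exists (mix s); split.
  apply: (lp_optimal_mix (lam := 0) (mu := fun i => f [set i])) => [||i|S|].
  - rewrite /= subr_ge0 sum_le1; apply/allP => _ /mapP[i _ ->].
    by have /andP[] := x01 i.
  - by rewrite (sum_s predT) subrK.
  - by rewrite (sum_s (fun S => i \in S)) inE add0r (big_pred1 i) // => j; rewrite /= inE eq_sym.
  - by rewrite add0r in_Fn_subadditive.
  - rewrite big_cons big_image /= f0 mulr0 !add0r.
    by apply: eq_bigr => i _; rewrite mulrC.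
move=> T T_neq0; rewrite sum_mix (sum_s (fun S => T \subset S)) subset0 (negbTE T_neq0) add0r.
have [j Tj] := set0Pn _ T_neq0.
have [->|T_neqj] := eqVneq T [set j].
  by rewrite big_set1 (big_pred1 j) // => i; rewrite /= sub1set inE eq_sym.
rewrite [X in X <= _]big_pred0; last first.
  move=> i /=; apply/negP => T_sub_i; have /set1P ji := subsetP T_sub_i j Tj.
  by move: T_sub_i; rewrite subset1 (negbTE T_neq0) orbF -ji (negbTE T_neqj).
by apply: prodr_ge0 => i _; have /andP[] := x01 i.
Qed.

Lemma lp_optimum_cosingletons f x : in_Fn f -> in_cube x -> \sum_i (1 - x i) <= 1 ->
  exists theta, lp_optimal f x theta /\ neg_cylinder_dep x theta.
Proof.
move=> Ff x01 sum_le1.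
set s := (1 - \sum_i (1 - x i), setT) :: [seq (1 - x i, ~: [set i]) | i : 'I_n].
have sum_s (P : pred {set 'I_n}) : \sum_(p <- s | P p.2) p.1 =
    (if P setT then 1 - \sum_i (1 - x i) else 0) + \sum_(i | P (~: [set i])) (1 - x i).
  by rewrite big_cons big_image_cond /=; case: (P setT); rewrite ?add0r.
have [_ _ _ _ f1] := Ff.
exists (mix s); split.
  pose mu i := f setT - f (~: [set i]).
  apply: (lp_optimal_mix (lam := f setT - \sum_i mu i) (mu := mu)) => [||j|S|].
  - rewrite /= subr_ge0 sum_le1; apply/allP => _ /mapP[i _ ->].
    by have /andP[_] := x01 i; rewrite subr_ge0.
  - by rewrite (sum_s predT) subrK.
  - rewrite (sum_s (fun S => j \in S)) inE (bigD1 j) //=.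
    under [X in _ + X = _]eq_bigl do rewrite !inE eq_sym.
    by rewrite opprD addrA subrK subKr.
  - rewrite (bigID (mem S)) /=.
    have -> : \sum_(i | i \notin S) mu i = \sum_(i in ~: S) mu i.
      by apply: eq_bigl => i; rewrite inE.
    by have := in_Fn_marginal_superadditive S Ff; rewrite /mu; lra.
  - rewrite big_cons big_image /= mulrBl mul1r mulr_suml -addrA.
    rewrite -[RHS]addrA; congr (_ + _); rewrite -!sumrN -!big_split /=.
    by apply: eq_bigr => i _; rewrite /mu; ring.
move=> T _; rewrite sum_mix (sum_s (fun S => T \subset S)) subsetT /=.
under [X in _ + X <= _]eq_bigl do rewrite subsetC sub1set inE.
rewrite (bigID (mem T)) /= opprD addrA subrK.
exact: one_sub_sum_le_prod.
Qed.

End ConcaveClosureLP.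

Section Relabel.
Variables (R : realType) (n : nat).
Implicit Types (f theta : {set 'I_n} -> R) (x : 'I_n -> R) (S : {set 'I_n}).
Implicit Types (sigma : {perm 'I_n}).

Definition relabel sigma (g : {set 'I_n} -> R) S := g (sigma @: S).

Lemma sum_relabel sigma (P : pred {set 'I_n}) (F : {set 'I_n} -> R) :
  \sum_(S : {set 'I_n} | P (sigma @: S)) F (sigma @: S) = \sum_(S | P S) F S.
Proof. by rewrite [RHS](reindex_inj (imset_inj (@perm_inj _ sigma))). Qed.

Lemma imset_permE sigma S : sigma @: S = sigma^-1%g @^-1: S.
Proof. by rewrite -im_permV invgK. Qed.

Lemma relabelKV sigma g S : relabel sigma (relabel sigma^-1%g g) S = g S.
Proof. by rewrite /relabel -imset_comp (eq_imset _ (permK sigma)) imset_id. Qed.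

Lemma relabel_setT sigma g : relabel sigma g setT = g setT.
Proof. by rewrite /relabel imset_permE preimsetT. Qed.

Lemma in_Fn_relabel sigma f : in_Fn f -> in_Fn (relabel sigma f).
Proof.
case=> f_ge0 f_mono f_submod f0 f1; split=> [S|S T ST|S T||]; rewrite /relabel.
- exact: f_ge0.
- exact/f_mono/imsetS.
- by rewrite imsetI ?imsetU //; apply: in2W; apply: perm_inj.
- by rewrite imset0.
- by rewrite imset_permE preimsetT.
Qed.

Lemma lp_feasible_relabel sigma x y theta : (forall i, y i = x (sigma i)) ->
  lp_feasible x theta -> lp_feasible y (relabel sigma theta).
Proof.
move=> yE [theta_ge0 theta_sum1 theta_marg]; split=> [S||i].
- exact: theta_ge0.
- by rewrite -theta_sum1; exact: (sum_relabel sigma predT theta).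
rewrite yE -theta_marg -(sum_relabel sigma (fun S => sigma i \in S)).
by apply: eq_bigl => S; rewrite mem_imset //; apply: perm_inj.
Qed.

Lemma lp_obj_relabel sigma f theta :
  lp_obj (relabel sigma f) (relabel sigma theta) = lp_obj f theta.
Proof. exact: (sum_relabel sigma predT (fun S => theta S * f S)). Qed.

Lemma lp_optimal_relabel sigma f x theta :
  lp_optimal (relabel sigma f) (fun i => x (sigma i)) theta ->
  lp_optimal f x (relabel sigma^-1%g theta).
Proof.
case=> feas opt; split.
  by apply: lp_feasible_relabel feas => i; rewrite permKV.
move=> theta' /(lp_feasible_relabel (sigma := sigma) (y := fun i => x (sigma i)) (fun=> erefl)).
move=> /opt; rewrite lp_obj_relabel => /le_trans; apply.
rewrite -(lp_obj_relabel sigma f (relabel sigma^-1%g theta)).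
by under [X in _ <= X]eq_bigr do rewrite relabelKV.
Qed.

Lemma sum_perm sigma (F : 'I_n -> R) : \sum_i F (sigma i) = \sum_i F i.
Proof. by rewrite [RHS](reindex_inj (@perm_inj _ sigma)). Qed.

Definition partition_value f i := f [set i] + f (~: [set i]).

Lemma partition_value_relabel sigma f i :
  partition_value (relabel sigma f) i = partition_value f (sigma i).
Proof.
by rewrite /partition_value /relabel imset_set1 imset_permE preimsetC -imset_permE imset_set1.
Qed.

Lemma optimum_setT0_relabel sigma f x :
  (exists theta, lp_optimal (relabel sigma f) (fun i => x (sigma i)) theta /\ theta setT = 0) ->
  exists theta, lp_optimal f x theta /\ theta setT = 0.
Proof.
case=> theta [opt theta0]; exists (relabel sigma^-1%g theta).
by rewrite relabel_setT; split=> //; apply: lp_optimal_relabel.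
Qed.

End Relabel.

Section ThreeElements.
Variable R : realType.
Implicit Types (f : {set 'I_3} -> R) (x : 'I_3 -> R).

Local Notation o0 := (@Ordinal 3 0 isT).
Local Notation o1 := (@Ordinal 3 1 isT).
Local Notation o2 := (@Ordinal 3 2 isT).

Lemma ord3P (i : 'I_3) : [\/ i = o0, i = o1 | i = o2].
Proof.
by case: i => -[|[|[|]]] // ?; [apply: Or31 | apply: Or32 | apply: Or33]; apply: val_inj.
Qed.

Lemma sum_ord3 (F : 'I_3 -> R) : \sum_i F i = F o0 + F o1 + F o2.
Proof. by rewrite !big_ord_recr big_ord0 /= add0r; congr (F _ + F _ + F _); apply: val_inj. Qed.

Lemma prod_ord3 (F : 'I_3 -> R) : \prod_i F i = F o0 * F o1 * F o2.
Proof. by rewrite !big_ord_recr big_ord0 /= mul1r; congr (F _ * F _ * F _); apply: val_inj. Qed.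

Lemma sum_in_ord3 (A : {set 'I_3}) (F : 'I_3 -> R) : \sum_(i in A) F i =
  (if o0 \in A then F o0 else 0) + (if o1 \in A then F o1 else 0) + (if o2 \in A then F o2 else 0).
Proof. by rewrite big_mkcond sum_ord3. Qed.

Lemma eq_set3 (A B : {set 'I_3}) : (A == B) =
  [&& (o0 \in A) == (o0 \in B), (o1 \in A) == (o1 \in B) & (o2 \in A) == (o2 \in B)].
Proof.
apply/eqP/and3P => [->|[/eqP A0 /eqP A1 /eqP A2]]; first by rewrite !eqxx.
by apply/setP => i; case: (ord3P i) => ->.
Qed.

Lemma set3_ind (P : {set 'I_3} -> Prop) :
  P set0 -> P [set o0] -> P [set o1] -> P [set o2] ->
  P [set o0; o1] -> P [set o0; o2] -> P [set o1; o2] -> P setT -> forall S, P S.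
Proof.
move=> P0 P1 P2 P3 P01 P02 P12 PT S.
case S0: (o0 \in S); case S1: (o1 \in S); case S2: (o2 \in S);
  [ suff -> : S = setT by [] | suff -> : S = [set o0; o1] by []
  | suff -> : S = [set o0; o2] by [] | suff -> : S = [set o0] by []
  | suff -> : S = [set o1; o2] by [] | suff -> : S = [set o1] by []
  | suff -> : S = [set o2] by [] | suff -> : S = set0 by [] ];
  by apply/eqP; rewrite eq_set3 S0 S1 S2 !inE.
Qed.

Definition vec3 (a b c : R) (i : 'I_3) : R := [:: a; b; c]`_i.

Lemma dual_feasible3 f (lam a b c : R) :
  f set0 <= lam -> f [set o0] <= lam + a -> f [set o1] <= lam + b -> f [set o2] <= lam + c ->
  f [set o0; o1] <= lam + a + b -> f [set o0; o2] <= lam + a + c ->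
  f [set o1; o2] <= lam + b + c -> f setT <= lam + a + b + c ->
  forall S, f S <= lam + \sum_(i in S) vec3 a b c i.
Proof. by move=> ? ? ? ? ? ? ? ? S; elim/set3_ind: S; rewrite sum_in_ord3 !inE /vec3 /=; lra. Qed.

Lemma in_F3_submodular f : in_Fn f ->
  [/\ f [set o0; o1] <= f [set o0] + f [set o1], f [set o0; o2] <= f [set o0] + f [set o2]
    & f [set o1; o2] <= f [set o1] + f [set o2]] /\
  [/\ f [set o0] + f setT <= f [set o0; o1] + f [set o0; o2],
      f [set o1] + f setT <= f [set o0; o1] + f [set o1; o2]
    & f [set o2] + f setT <= f [set o0; o2] + f [set o1; o2]].
Proof.
case=> _ _ f_submod f0 _.
have sub A B C D : A :&: B == C -> A :|: B == D -> f C + f D <= f A + f B.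
  by move=> /eqP <- /eqP <-; apply: f_submod.
have sub0 A B D : A :&: B == set0 -> A :|: B == D -> f D <= f A + f B.
  by rewrite -[f D]add0r -f0; exact: sub.
by do 2!split; [apply: sub0 | apply: sub0 | apply: sub0 | apply: sub | apply: sub | apply: sub];
  rewrite eq_set3 !inE /= ?eqxx.
Qed.

Section MiddleCase.
Variables (f : {set 'I_3} -> R) (x : 'I_3 -> R).
Hypotheses (Ff : in_Fn f) (x01 : in_cube x).
Hypothesis pv_max : forall i, partition_value f i <= partition_value f o0.

Lemma partition_value_max3 :
  f [set o1] + f [set o0; o2] <= f [set o0] + f [set o1; o2] /\
  f [set o2] + f [set o0; o1] <= f [set o0] + f [set o1; o2].
Proof.
have C0 : ~: [set o0] = [set o1; o2] by apply/eqP; rewrite eq_set3 !inE /= ?eqxx.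
have C1 : ~: [set o1] = [set o0; o2] by apply/eqP; rewrite eq_set3 !inE /= ?eqxx.
have C2 : ~: [set o2] = [set o0; o1] by apply/eqP; rewrite eq_set3 !inE /= ?eqxx.
by have := pv_max o1; have := pv_max o2; rewrite /partition_value C0 C1 C2.
Qed.

Lemma lp_optimum_middle_low : 1 <= x o0 + x o1 + x o2 -> x o0 + x o1 <= 1 -> x o2 <= x o1 ->
  exists theta, lp_optimal f x theta /\ theta setT = 0.
Proof.
move=> s_ge1 x01_le1 x21; have /andP[x0_ge0 _] := x01 o0.
exists (mix [:: (x o0, [set o0]); (1 - x o0 - x o2, [set o1]);
                (1 - x o0 - x o1, [set o2]); (x o0 + x o1 + x o2 - 1, [set o1; o2])]).
split; last by rewrite /mix !big_cons big_nil !eq_set3 !inE /= ?eqxx.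
pose lam := f [set o1] + f [set o2] - f [set o1; o2].
apply: (lp_optimal_mix (lam := lam)
  (mu := vec3 (f [set o0] - lam) (f [set o1; o2] - f [set o2]) (f [set o1; o2] - f [set o1])))
  => [||i|S|].
- by rewrite /= !andbT; apply/and4P; split; lra.
- by rewrite !big_cons big_nil /=; ring.
- by case: (ord3P i) => ->; rewrite !big_cons big_nil !inE /=; ring.
- have [_ _ _ f0 f1] := Ff; have [[s01 s02 s12] [s0 s1 s2]] := in_F3_submodular Ff.
  have [pv1 pv2] := partition_value_max3.
  by apply: dual_feasible3; rewrite /lam; lra.
- by rewrite !big_cons big_nil sum_ord3 /vec3 /lam /=; ring.
Qed.

Lemma lp_optimum_middle_mid : 1 < x o0 + x o1 -> x o0 + x o2 <= 1 ->
  exists theta, lp_optimal f x theta /\ theta setT = 0.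
Proof.
move=> x01_gt1 x02_le1; have /andP[_ x1_le1] := x01 o1; have /andP[x2_ge0 _] := x01 o2.
exists (mix [:: (1 - x o1, [set o0]); (1 - x o0 - x o2, [set o1]);
                (x o0 + x o1 - 1, [set o0; o1]); (x o2, [set o1; o2])]).
split; last by rewrite /mix !big_cons big_nil !eq_set3 !inE /= ?eqxx.
pose lam := f [set o0] + f [set o1] - f [set o0; o1].
apply: (lp_optimal_mix (lam := lam) (mu := vec3 (f [set o0; o1] - f [set o1])
  (f [set o0; o1] - f [set o0]) (f [set o1; o2] - f [set o1]))) => [||i|S|].
- by rewrite /= !andbT; apply/and4P; split; lra.
- by rewrite !big_cons big_nil /=; ring.
- by case: (ord3P i) => ->; rewrite !big_cons big_nil !inE /=; ring.
- have [_ _ _ f0 f1] := Ff; have [[s01 s02 s12] [s0 s1 s2]] := in_F3_submodular Ff.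
  have [pv1 pv2] := partition_value_max3.
  by apply: dual_feasible3; rewrite /lam; lra.
- by rewrite !big_cons big_nil sum_ord3 /vec3 /lam /=; ring.
Qed.

Lemma lp_optimum_middle_high : x o0 + x o1 + x o2 <= 2 -> 1 < x o0 + x o2 -> x o2 <= x o1 ->
  exists theta, lp_optimal f x theta /\ theta setT = 0.
Proof.
move=> s_le2 x02_gt1 x21; have /andP[_ x0_le1] := x01 o0.
exists (mix [:: (2 - x o0 - x o1 - x o2, [set o0]); (x o0 + x o1 - 1, [set o0; o1]);
                (x o0 + x o2 - 1, [set o0; o2]); (1 - x o0, [set o1; o2])]).
split; last by rewrite /mix !big_cons big_nil !eq_set3 !inE /= ?eqxx.
pose lam := f [set o1; o2] - f [set o0; o1] - f [set o0; o2] + 2 * f [set o0].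
apply: (lp_optimal_mix (lam := lam) (mu := vec3 (f [set o0] - lam)
  (f [set o0; o1] - f [set o0]) (f [set o0; o2] - f [set o0]))) => [||i|S|].
- by rewrite /= !andbT; apply/and4P; split; lra.
- by rewrite !big_cons big_nil /=; ring.
- by case: (ord3P i) => ->; rewrite !big_cons big_nil !inE /=; ring.
- have [_ _ _ f0 f1] := Ff; have [[s01 s02 s12] [s0 s1 s2]] := in_F3_submodular Ff.
  have [pv1 pv2] := partition_value_max3.
  by apply: dual_feasible3; rewrite /lam; lra.
- by rewrite !big_cons big_nil sum_ord3 /vec3 /lam /=; ring.
Qed.

End MiddleCase.

Lemma lp_optimum_middle_max f x : in_Fn f -> in_cube x -> 1 <= \sum_i x i <= 2 ->
  (forall i, partition_value f i <= partition_value f o0) ->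
  exists theta, lp_optimal f x theta /\ theta setT = 0.
Proof.
move=> Ff x01 s12 pv_max.
wlog x21 : f x Ff x01 s12 pv_max / x o2 <= x o1 => [sorted|].
  have [|/ltW x12] := lerP (x o2) (x o1); first exact: sorted.
  pose sigma := tperm o1 o2; apply: (optimum_setT0_relabel (sigma := sigma)); apply: sorted.
  - exact: in_Fn_relabel.
  - by move=> i; apply: x01.
  - by rewrite sum_perm.
  - by move=> i; rewrite !partition_value_relabel /sigma (@tpermD _ o1 o2 o0).
  - by rewrite /sigma tpermL tpermR.
move: s12; rewrite sum_ord3 => /andP[s_ge1 s_le2].
have [x01_le1|x01_gt1] := lerP (x o0 + x o1) 1; first exact: lp_optimum_middle_low.
have [x02_le1|x02_gt1] := lerP (x o0 + x o2) 1; first exact: lp_optimum_middle_mid.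
exact: lp_optimum_middle_high.
Qed.

Lemma lp_optimum_middle f x : in_Fn f -> in_cube x -> 1 <= \sum_i x i <= 2 ->
  exists theta, lp_optimal f x theta /\ theta setT = 0.
Proof.
move=> Ff x01 s12; have [i _ i_max] := arg_maxP (partition_value f) (isT : xpredT o0).
pose sigma := tperm o0 i; apply: (optimum_setT0_relabel (sigma := sigma)).
apply: lp_optimum_middle_max.
- exact: in_Fn_relabel.
- by move=> j; apply: x01.
- by rewrite sum_perm.
- by move=> j; rewrite !partition_value_relabel tpermL; apply: i_max.
Qed.

End ThreeElements.

Unset Implicit Arguments.
Set Strict Implicit.

Theorem mainTheorem7 (R : realType) (f : {set 'I_3} -> R) (x : 'I_3 -> R) :
  in_Fn f -> in_cube x ->
  (exists theta, lp_optimal f x theta /\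
     theta setT <= x (@Ordinal 3 0 isT) * x (@Ordinal 3 1 isT) * x (@Ordinal 3 2 isT)) /\
  (x (@Ordinal 3 0 isT) + x (@Ordinal 3 1 isT) + x (@Ordinal 3 2 isT) <= 1 \/ 2 <= x (@Ordinal 3 0 isT) + x (@Ordinal 3 1 isT) + x (@Ordinal 3 2 isT) ->
   exists theta, lp_optimal f x theta /\ neg_cylinder_dep x theta).
Proof.
move=> Ff x01; rewrite -sum_ord3 -prod_ord3.
have extreme : \sum_i x i <= 1 \/ 2 <= \sum_i x i ->
    exists theta, lp_optimal f x theta /\ neg_cylinder_dep x theta.
  case=> [s_le1 | s_ge2]; first exact: lp_optimum_singletons.
  by apply: lp_optimum_cosingletons => //; move: s_ge2; rewrite !sum_ord3; lra.
split=> //.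
have [s_mid | s_ext] := boolP (1 < \sum_i x i < 2).
  have [|theta [opt theta0]] := lp_optimum_middle Ff x01.
    by case/andP: s_mid => /ltW -> /ltW ->.
  by exists theta; rewrite theta0; split=> //; apply: prodr_ge0 => i _; case/andP: (x01 i).
have [theta [opt ncd]] : exists theta, lp_optimal f x theta /\ neg_cylinder_dep x theta.
  by apply: extreme; apply/orP; rewrite !leNgt -negb_and.
exists theta; split=> //; apply: neg_cylinder_dep_setT ncd.
by apply/set0Pn; exists (@Ordinal 3 0 isT).
Qed.
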